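(* Let $G=(V,E)$ be a finite graph with boundary $B\subseteq V$, $|B|\ge 2$. Let $L$ be the Laplacian matrix of $G$ and let $N$ be the principal submatrix of $L$ indexed by $B$, with eigenvalues $\mu_1(N)\le\mu_2(N)\le\cdots\le\mu_{|B|}(N)$. Then $$\sigma_k(G,B)\le\mu_k(N),\qquad k=1,2,\ldots,|B|.$$
   Context: $G=(V,E)$ is a finite undirected graph. A boundary is a subset $B\subseteq V$ with $|B|\ge2$. The Laplacian matrix is $L=D-A$, where $D$ is the diagonal degree matrix and $A$ the adjacency matrix. For $f:V\to\mathbb{R}$, $f\neq0$, the Rayleigh quotient is $R(f)=\frac{\sum_{\{x,y\}\in E}(f(x)-f(y))^2}{\sum_{x\in B}f(x)^2}$, interpreted as $+\infty$ if $f$ vanishes on $B$. For $1\le k\le|B|$, the $k$-th Steklov eigenvalue is $\sigma_k(G,B)=\min_{W\subseteq\mathbb{R}^V,\dim W=k}\max_{0\ne f\in W}R(f)$. *)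

From HB Require Import structures.
From mathcomp Require Import all_boot all_order all_algebra.
From mathcomp Require Import all_classical all_reals ereal.
Set Implicit Arguments. Unset Strict Implicit. Unset Printing Implicit Defensive.
Import Order.TTheory GRing.Theory Num.Theory.
Local Open Scope ring_scope.
Local Open Scope classical_set_scope.

(* Vertex set V = 'I_n; a finite simple undirected graph is a symmetric,
   irreflexive relation e on 'I_n.  Functions f : V -> R are row vectors
   'rV[R]_n. *)
Definition simple_graph n (e : rel 'I_n) : Prop :=
  symmetric e /\ irreflexive e.

Definition dirichlet {R : realType} n (e : rel 'I_n) (f : 'rV[R]_n) : R :=
  \sum_(x < n) \sum_(y < n | (x < y)%N && e x y) (f ord0 x - f ord0 y) ^+ 2.

Definition bnorm2 {R : realType} n (B : {set 'I_n}) (f : 'rV[R]_n) : R :=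
  \sum_(x in B) f ord0 x ^+ 2.

Definition rayleigh {R : realType} n (e : rel 'I_n) (B : {set 'I_n})
    (f : 'rV[R]_n) : \bar R :=
  if bnorm2 B f == 0 then +oo%E else (dirichlet e f / bnorm2 B f)%:E.

(* k-th Steklov eigenvalue: min over k-dimensional subspaces W of R^V
   (represented as row spaces of n x n matrices) of max_{0 <> f in W} R(f);
   written as inf/sup in the extended reals (min/max are attained). *)
Definition steklov {R : realType} n (e : rel 'I_n) (B : {set 'I_n}) (k : nat)
    : \bar R :=
  ereal_inf [set ereal_sup [set rayleigh e B f | f in
                 [set f : 'rV[R]_n | (f <= W)%MS /\ f != 0]]
            | W in [set W : 'M[R]_n | \rank W = k]].

Definition laplacian {R : realType} n (e : rel 'I_n) : 'M[R]_n :=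
  \matrix_(i, j) ((if i == j then #|[set y | e i y]|%:R else 0) - (e i j)%:R).

Definition bsub {R : realType} n (B : {set 'I_n}) (M : 'M[R]_n)
    : 'M[R]_#|B| :=
  \matrix_(i, j) M (enum_val i) (enum_val j).

Definition sorted_eigenvalues {R : realType} m (M : 'M[R]_m) (s : seq R) : Prop :=
  sorted <=%R s /\ char_poly M = \prod_(a <- s) ('X - a%:P).

From HB Require Import structures.
From mathcomp Require Import all_boot all_order all_algebra.
From mathcomp Require Import all_classical all_reals ereal.
From mathcomp Require Import perm ring.
Import Order.TTheory GRing.Theory Num.Theory.
Local Open Scope ring_scope.
Set Implicit Arguments. Unset Strict Implicit. Unset Printing Implicit Defensive.

(* Write N = E L E^T, where E : 'M_(|B|, V) extends functions on B by zero.
   N is real symmetric with split characteristic polynomial, so it has an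
   orthonormal eigenbasis whose eigenvalues can be listed as mu_1 <= ... <= mu_|B|;
   on the span U of the first k eigenvectors, y N y^T <= mu_k |y|^2.  For f = y E
   with y in U, the Dirichlet energy of f is f L f^T = y N y^T and its boundary
   norm is |y|^2, so the Rayleigh quotient is at most mu_k on the k-dimensional
   space U E, whence sigma_k <= mu_k. *)

Lemma char_poly_similar (F : fieldType) n (P A B : 'M[F]_n) :
  P \in unitmx -> P *m A = B *m P -> char_poly A = char_poly B.
Proof.
move=> P_unit PA.
have : map_mx polyC P *m char_poly_mx A = char_poly_mx B *m map_mx polyC P.
  by rewrite /char_poly_mx mulmxBr mulmxBl -!map_mxM PA scalar_mxC.
move/(congr1 determinant); rewrite !det_mulmx [RHS]mulrC; apply: mulfI.
by rewrite det_map_mx polyC_eq0 -unitfE -unitmxE.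
Qed.

Lemma stablemx_eigenvector (F : fieldType) m (N S : 'M[F]_m) (s : seq F) :
  char_poly N = \prod_(a <- s) ('X - a%:P) -> stablemx S N -> S != 0 ->
  exists a, exists2 v : 'rV_m, (v <= S)%MS && (v != 0) & v *m N = a *: v.
Proof.
case: m => [|m] in N S *; first by move=> _ _; rewrite thinmx0 eqxx.
move=> chN SN S_neq0.
(* By Cayley-Hamilton a nonzero u in S is killed by the product of the N - a;
   the last nonzero partial product u (N - a_1) ... (N - a_j) is an eigenvector. *)
suff IH : forall t (u : 'rV_m.+1), (u <= S)%MS -> u != 0 ->
    u *m horner_mx N (\prod_(a <- t) ('X - a%:P)) = 0 ->
  exists a, exists2 v : 'rV_m.+1, (v <= S)%MS && (v != 0) & v *m N = a *: v.
  apply: (IH s); [exact: nz_row_sub | by rewrite nz_row_eq0 |].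
  by rewrite -chN Cayley_Hamilton mulmx0.
elim=> [|a t IHt] u uS u_neq0.
  by rewrite big_nil rmorph1 mulmx1 => /eqP; rewrite (negPf u_neq0).
rewrite big_cons rmorphM rmorphB /= horner_mx_X horner_mx_C mulmxA.
have [ua0|ua_neq0] := eqVneq (u *m (N - a%:M)) 0.
  move=> _; exists a, u; first by rewrite uS u_neq0.
  by apply/eqP; rewrite -subr_eq0 -mul_mx_scalar -mulmxBr ua0.
apply: IHt ua_neq0; rewrite mulmxBr mul_mx_scalar addmx_sub ?eqmx_opp ?scalemx_sub //.
exact: submx_trans (submxMr N uS) SN.
Qed.

Lemma mul_tr_rowE (R : pzSemiRingType) m (u v : 'rV[R]_m) :
  (u *m v^T) 0 0 = \sum_i u 0 i * v 0 i.
Proof. by rewrite mxE; apply: eq_bigr => i _; rewrite mxE. Qed.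

Lemma quad_formE (R : pzSemiRingType) m (x : 'rV[R]_m) (A : 'M_m) :
  (x *m A *m x^T) 0 0 = \sum_i \sum_j x 0 i * A i j * x 0 j.
Proof.
rewrite mxE; under eq_bigr do rewrite !mxE big_distrl /=.
exact: exchange_big.
Qed.

Lemma diag_quad_formE (R : comPzSemiRingType) m (x d : 'rV[R]_m) :
  (x *m diag_mx d *m x^T) 0 0 = \sum_i d 0 i * x 0 i ^+ 2.
Proof.
rewrite mul_mx_diag mul_tr_rowE; apply: eq_bigr => i _.
by rewrite mxE mulrAC mulrC.
Qed.

Lemma rowsub_orthonormal_eigen (R : pzSemiRingType) m m' n (f : 'I_m' -> 'I_m)
    (P : 'M[R]_(m, n)) (N : 'M_n) (d : 'rV_m) :
  injective f -> P *m P^T = 1%:M -> P *m N = diag_mx d *m P ->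
  rowsub f P *m (rowsub f P)^T = 1%:M /\
  rowsub f P *m N = diag_mx (\row_i d 0 (f i)) *m rowsub f P.
Proof.
move=> f_inj PP PN; split.
  apply/matrixP => i j; have /matrixP/(_ (f i) (f j)) := PP.
  by rewrite !mxE (inj_eq f_inj) => <-; apply: eq_bigr => k _; rewrite !mxE.
by rewrite mul_rowsub_mx PN; apply/matrixP => i j; rewrite !mul_diag_mx !mxE.
Qed.

Lemma sqnorm_gt0 (R : realDomainType) m (v : 'rV[R]_m) :
  v != 0 -> 0 < (v *m v^T) 0 0.
Proof.
move=> v_neq0; have sq_ge0 i : 0 <= v 0 i * v 0 i by rewrite -expr2 sqr_ge0.
rewrite mul_tr_rowE lt0r sumr_ge0 // andbT; apply: contra v_neq0.
rewrite psumr_eq0 // => /allP v0; apply/eqP/rowP => i; rewrite mxE.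
by apply/eqP; rewrite -sqrf_eq0 expr2; apply: v0; rewrite mem_index_enum.
Qed.

Lemma orthonormal_eigen_quad_le (R : realFieldType) k m (Q : 'M[R]_(k, m))
    (N : 'M_m) (g : 'rV_k) c :
  Q *m Q^T = 1%:M -> Q *m N = diag_mx g *m Q -> (forall i, g 0 i <= c) ->
  forall y : 'rV_m, (y <= Q)%MS -> (y *m N *m y^T) 0 0 <= c * (y *m y^T) 0 0.
Proof.
move=> QQ QN g_le y /submxP[x ->].
have -> : x *m Q *m N *m (x *m Q)^T = x *m diag_mx g *m x^T.
  by rewrite trmx_mul -!mulmxA (mulmxA Q) QN -mulmxA (mulmxA Q) QQ mul1mx.
have -> : x *m Q *m (x *m Q)^T = x *m x^T.
  by rewrite trmx_mul mulmxA -(mulmxA x) QQ mulmx1.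
rewrite diag_quad_formE mul_tr_rowE mulr_sumr; apply: ler_sum => i _.
by rewrite -expr2 ler_wpM2r ?sqr_ge0.
Qed.

Section SymmetricMatrices.
Variables (R : rcfType) (m : nat) (N : 'M[R]_m) (s : seq R).
Hypotheses (N_sym : N^T = N) (chN : char_poly N = \prod_(a <- s) ('X - a%:P)).

Lemma symmetric_orthonormal_eigenrows r : (r <= m)%N ->
  exists (P : 'M_(r, m)) (d : 'rV_r), P *m P^T = 1%:M /\ P *m N = diag_mx d *m P.
Proof.
elim: r => [|r IHr] lt_rm; first by exists 0, 0; split; apply/matrixP => -[].
have [P [d [PP PN]]] := IHr (ltnW lt_rm).
have S_neq0 : kermx P^T != 0.
  rewrite -mxrank_eq0 mxrank_ker mxrank_tr -lt0n subn_gt0.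
  exact: leq_ltn_trans (rank_leq_row P) lt_rm.
have S_stable : stablemx (kermx P^T) N.
  rewrite sub_kermx -mulmxA -{1}N_sym -trmx_mul PN trmx_mul tr_diag_mx.
  by rewrite mulmxA mulmx_ker mul0mx.
have [a [v /andP[vS v_neq0] vN]] := stablemx_eigenvector chN S_stable S_neq0.
pose u := (Num.sqrt ((v *m v^T) 0 0))^-1 *: v.
have uu : u *m u^T = 1%:M.
  have v2_gt0 := sqnorm_gt0 v_neq0.
  apply/matrixP => i j; rewrite !ord1 [RHS]mxE eqxx mulr1n /u linearZ /=.
  rewrite -scalemxAl -scalemxAr scalerA [LHS]mxE -expr2 exprVn.
  by rewrite sqr_sqrtr ?mulVf ?gt_eqF ?ltW.
have uP : u *m P^T = 0 by rewrite -scalemxAl (sub_kermxP vS) scaler0.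
have uN : u *m N = a *: u by rewrite -scalemxAl vN scalerA mulrC -scalerA.
(* The block matrices below have 1 + r rows, which is r.+1 only up to conversion. *)
suff : exists (P' : 'M_(1 + r, m)) (d' : 'rV_(1 + r)),
    P' *m P'^T = 1%:M /\ P' *m N = diag_mx d' *m P' by [].
exists (col_mx u P), (row_mx a%:M d); split.
  rewrite tr_col_mx mul_col_row uu uP PP -[P]trmxK -trmx_mul uP trmx0.
  by rewrite -scalar_mx_block.
rewrite mul_col_mx uN PN diag_mx_row mul_block_col !mul0mx addr0 add0r.
congr col_mx; rewrite -mul_scalar_mx; congr (_ *m _).
by apply/matrixP => i j; rewrite !ord1 !mxE.
Qed.

Lemma symmetric_spectral :
  exists2 P : 'M_m, P *m P^T = 1%:M & P *m N = diag_mx (\row_i s`_i) *m P.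
Proof.
have [P [d [PP PN]]] := symmetric_orthonormal_eigenrows (leqnn m).
have P_unit : P \in unitmx by case: (mulmx1_unit PP).
have : perm_eq s [tuple d 0 i | i < m].
  apply: prod_XsubC_eq; rewrite -chN (char_poly_similar P_unit PN).
  rewrite char_poly_trig ?diag_mx_is_trig // big_map big_enum /=.
  by apply: eq_bigr => i _; rewrite mxE eqxx.
case/tuple_permP => p sE.
have [PP' PN'] := rowsub_orthonormal_eigen (@perm_inj _ p) PP PN.
exists (rowsub p P) => //; rewrite PN'; congr (diag_mx _ *m _).
by apply/rowP => i; rewrite !mxE sE -tnth_nth !tnth_mktuple.
Qed.

Lemma symmetric_courant_fischer_le k : sorted <=%R s -> (k <= m)%N ->
  exists2 Q : 'M_(k, m), row_free Q &
    forall y : 'rV_m, (y <= Q)%MS -> (y *m N *m y^T) 0 0 <= s`_k.-1 * (y *m y^T) 0 0.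
Proof.
move=> s_sorted le_km; have [P PP PN] := symmetric_spectral.
have widen_inj : injective (widen_ord le_km) by move=> i j [] /val_inj.
have [QQ QN] := rowsub_orthonormal_eigen widen_inj PP PN.
exists (rowsub (widen_ord le_km) P); first by apply/row_freeP; eexists; exact: QQ.
apply: orthonormal_eigen_quad_le QQ QN _ => i; rewrite !mxE /=.
have size_s : size s = m.
  by have := size_char_poly N; rewrite chN size_prod_XsubC => -[].
have k_gt0 : (0 < k)%N by apply: leq_ltn_trans (ltn_ord i).
apply: le_sorted_leq_nth => //; rewrite ?inE /= ?size_s.
- exact: leq_trans (ltn_ord i) le_km.
- by rewrite (leq_trans _ le_km) // ltn_predL.
- by rewrite -ltnS prednK.
Qed.

End SymmetricMatrices.

Lemma sum_sym_ltn (V : nmodType) n (G : 'I_n -> 'I_n -> V) :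
  (forall x, G x x = 0) -> (forall x y, G x y = G y x) ->
  \sum_(x < n) \sum_(y < n) G x y = (\sum_(x < n) \sum_(y < n | (x < y)%N) G x y) *+ 2.
Proof.
move=> G0 G_sym.
have splitG (x y : 'I_n) : G x y = G x y *+ (x < y)%N + G y x *+ (y < x)%N.
  by case: ltngtP => [_|_|/val_inj ->]; rewrite ?addr0 ?add0r ?G0 // G_sym.
under eq_bigr do under eq_bigr do rewrite splitG.
rewrite mulr2n; under eq_bigr do rewrite big_split /=.
rewrite big_split /= [in X in _ + X]exchange_big /=.
congr (_ + _); apply: eq_bigr => x _; rewrite [RHS]big_mkcond;
  by apply: eq_bigr => y _; rewrite mulrb.
Qed.

Section GraphLaplacian.
Variables (R : realType) (n : nat) (e : rel 'I_n).

Lemma laplacian_sym : symmetric e -> (laplacian (R := R) e)^T = laplacian e.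
Proof.
move=> e_sym; apply/matrixP => i j; rewrite !mxE eq_sym e_sym.
by case: eqVneq => // ->.
Qed.

Lemma laplacian_quad_formE (f : 'rV[R]_n) :
  (f *m laplacian e *m f^T) 0 0 =
    \sum_x \sum_y (e x y)%:R * (f 0 x * (f 0 x - f 0 y)).
Proof.
rewrite quad_formE; apply: eq_bigr => x _.
under eq_bigr do rewrite mxE mulrBr mulrBl.
under [RHS]eq_bigr do rewrite mulrBr mulrBr.
rewrite !sumrB (bigD1 x) //= eqxx big1 ?addr0 => [|y /negPf]; last first.
  by rewrite eq_sym => ->; rewrite mulr0 mul0r.
congr (_ - _); last by apply: eq_bigr => y _; rewrite -mulrA mulrCA.
rewrite -mulr_suml mulrAC mulrC; congr (_ * _).
have mem_e y : (y \in [set y | e x y]%classic) = e x y.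
  by apply/idP/idP; rewrite in_setE.
rewrite -sum1_card natr_sum big_mkcond; apply: eq_bigr => y _.
by rewrite mem_e; case: (e x y).
Qed.

Lemma dirichlet_laplacian (f : 'rV[R]_n) :
  symmetric e -> dirichlet e f = (f *m laplacian e *m f^T) 0 0.
Proof.
move=> e_sym; apply: (@pmulrnI _ 2) => //.
pose G x y := (e x y)%:R * (f 0 x - f 0 y) ^+ 2.
have -> : dirichlet e f *+ 2 = \sum_x \sum_y G x y.
  rewrite sum_sym_ltn => [|x|x y]; rewrite /G.
  - congr (_ *+ 2); apply: eq_bigr => x _; rewrite big_mkcondr.
    by apply: eq_bigr => y _; case: (e x y); rewrite ?mul1r ?mul0r.
  - by rewrite subrr expr0n mulr0.
  - by rewrite e_sym -sqrrN opprB.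
rewrite laplacian_quad_formE mulr2n [in X in _ = _ + X]exchange_big -big_split.
apply: eq_bigr => x _; rewrite -big_split; apply: eq_bigr => y _.
by rewrite /G (e_sym y x) /=; ring.
Qed.

End GraphLaplacian.

Section BoundaryExtension.
Variables (R : realType) (n : nat) (B : {set 'I_n}).

Definition bext : 'M[R]_(#|B|, n) := rowsub enum_val 1%:M.

Lemma bsubE (M : 'M[R]_n) : bsub B M = bext *m M *m bext^T.
Proof.
have -> : bext^T = colsub enum_val 1%:M.
  by apply/matrixP => i j; rewrite !mxE eq_sym.
rewrite mul_rowsub_mx mul1mx mulmx_colsub mulmx1.
by apply/matrixP => i j; rewrite !mxE.
Qed.

Lemma bext_orthonormal : bext *m bext^T = 1%:M.
Proof.
have := bsubE 1%:M; rewrite mulmx1 => <-.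
by apply/matrixP => i j; rewrite !mxE (inj_eq enum_val_inj).
Qed.

Lemma bext_row_free : row_free bext.
Proof. by apply/row_freeP; exists bext^T; exact: bext_orthonormal. Qed.

Lemma mul_bext_enum_val (y : 'rV[R]_#|B|) i : (y *m bext) 0 (enum_val i) = y 0 i.
Proof.
rewrite mxE (bigD1 i) //= big1 ?addr0 => [|j /negPf ji]; rewrite /bext !mxE.
  by rewrite eqxx mulr1.
by rewrite (inj_eq enum_val_inj) ji mulr0.
Qed.

Lemma bnorm2_bext (y : 'rV[R]_#|B|) : bnorm2 B (y *m bext) = (y *m y^T) 0 0.
Proof.
rewrite /bnorm2 big_enum_val mul_tr_rowE; apply: eq_bigr => i _.
by rewrite mul_bext_enum_val expr2.
Qed.

End BoundaryExtension.
Arguments bext {R n} B.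

Section SteklovBound.
Variables (R : realType) (n : nat) (e : rel 'I_n) (B : {set 'I_n}).

Lemma rayleigh_le (f : 'rV[R]_n) c :
  0 < bnorm2 B f -> dirichlet e f <= c * bnorm2 B f -> (rayleigh e B f <= c%:E)%E.
Proof. by move=> f_pos f_le; rewrite /rayleigh gt_eqF // lee_fin ler_pdivrMr. Qed.

Lemma steklov_le_subspace k (W : 'M[R]_n) c : \rank W = k ->
  (forall f : 'rV_n, (f <= W)%MS -> f != 0 -> (rayleigh e B f <= c%:E)%E) ->
  (steklov e B k <= c%:E)%E.
Proof.
move=> rW le_c; apply: le_trans (ereal_inf_lbound _) _; first by exists W.
by apply: ge_ereal_sup => _ [f [fW f_neq0] <-]; exact: le_c.
Qed.

End SteklovBound.

Theorem mainTheorem4 (R : realType) (n : nat) (e : rel 'I_n)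
    (B : {set 'I_n}) (mu : seq R) :
  simple_graph e -> (2 <= #|B|)%N ->
  sorted_eigenvalues (bsub B (laplacian (R := R) e)) mu ->
  forall k : nat, (1 <= k <= #|B|)%N ->
    (steklov (R := R) e B k <= (nth 0 mu k.-1)%:E)%E.
Proof.
move=> [e_sym _] _ [mu_sorted chN] k /andP[_ le_kB].
set N := bsub B (laplacian e) in chN *.
have N_sym : N^T = N.
  by rewrite /N bsubE !trmx_mul trmxK laplacian_sym ?mulmxA.
have [Q Q_free QN] := symmetric_courant_fischer_le N_sym chN mu_sorted le_kB.
apply: (steklov_le_subspace (W := <<Q *m bext B>>%MS)).
  by rewrite mxrank_gen mxrankMfree ?bext_row_free //; exact/eqP.
move=> f; rewrite genmxE => /submxP[x ->]; rewrite mulmxA => f_neq0.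
have y_neq0 : x *m Q != 0 by apply: contraNneq f_neq0 => ->; rewrite mul0mx.
apply: rayleigh_le; rewrite bnorm2_bext ?sqnorm_gt0 // dirichlet_laplacian //.
rewrite trmx_mul !mulmxA -(mulmxA _ (bext B)) -(mulmxA _ _ (bext B)^T) -bsubE.
by rewrite QN ?submxMl.
Qed.
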